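(* Let $\Omega=(-1,1)$, let $p,\nu\in\mathbb{N}_0$ with $\nu\le p$, and let $u\in H^{\nu+1}(\Omega)$. Let $q_{p,\nu}\in\Lambda_{p-\nu}^{p+\nu+1}$ be a polynomial with \[ q_{p,\nu}(1)=1,\quad q_{p,\nu}(-1)=0,\quad\text{and}\quad q_{p,\nu}^{(i)}(\pm1)=0\ \text{ for } i=1,\dots,\nu . \] Then \[ \bigl\lvert (u-\pi_p u)^{(\nu)}(\pm1)\bigr\rvert\le\|q_{p,\nu}\|_0\,\lvert u\rvert_{\nu+1}. \]
   Context: $L_j$ denotes the Legendre polynomial of degree $j$ on $(-1,1)$. For integers $i\le j$, $\Lambda_i^j:=\operatorname{span}\{L_i,L_{i+1},\dots,L_j\}$. $\|\cdot\|_0$ is the $L^2(\Omega)$ norm, and $\lvert u\rvert_k:=\|u^{(k)}\|_0$. $H^k(\Omega)$ is the usual Sobolev space. $\pi_p u$ is the $L^2(\Omega)$-orthogonal projection of $u$ onto the polynomials of degree $\le p$. *)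

From HB Require Import structures.
From mathcomp Require Import all_boot all_order all_algebra.
From mathcomp Require Import all_classical all_reals all_analysis.
Set Implicit Arguments. Unset Strict Implicit. Unset Printing Implicit Defensive.
Import Order.TTheory GRing.Theory Num.Theory.
Import numFieldNormedType.Exports.
Local Open Scope classical_set_scope.
Local Open Scope ring_scope.

Section Defs.
Variable R : realType.
Local Notation mu := (@lebesgue_measure R).

(* Omega = (-1,1); integrals over Omega are taken over [-1,1]
   (the endpoints are Lebesgue-null). *)
Definition Omega : set R := `[-1, 1].

Definition legendre (n : nat) : {poly R} :=
  (2 ^+ n * n`!%:R)^-1 *: ((('X ^+ 2 - 1) ^+ n)^`(n)).

Definition in_Lambda (i j : nat) (q : {poly R}) : Prop :=
  exists c : nat -> R, q = \sum_(i <= k < j.+1) c k *: legendre k.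

Definition L2norm (f : R -> R) : R :=
  Num.sqrt (\int[mu]_(x in Omega) (f x ^+ 2)).

Definition L2fun (f : R -> R) : Prop :=
  measurable_fun Omega f /\
  mu.-integrable Omega (fun x => (f x ^+ 2)%:E).

(* u = U 0 belongs to H^k(Omega), with U j the (continuous-up-to-the-boundary
   representative of the) j-th weak derivative of u, j < k, and U k the k-th
   weak derivative (an L^2 function).  One-dimensional characterization:
   U j is absolutely continuous on [-1,1] with derivative U j.+1, i.e.
   U j x - U j y = int_y^x U j.+1, and U k in L^2(Omega). *)
Definition sobolev_chain (k : nat) (U : nat -> R -> R) : Prop :=
  (forall j, (j <= k)%N -> mu.-integrable Omega (EFin \o U j)) /\
  (forall j, (j < k)%N -> forall x y : R, -1 <= y -> y <= x -> x <= 1 ->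
      U j x - U j y = \int[mu]_(t in `[y, x]) U j.+1 t) /\
  L2fun (U k).

Definition is_L2proj (p : nat) (u : R -> R) (P : {poly R}) : Prop :=
  (size P <= p.+1)%N /\
  forall r : {poly R}, (size r <= p.+1)%N ->
    \int[mu]_(x in Omega) ((u x - P.[x]) * r.[x]) = 0.

End Defs.

From HB Require Import structures.
From mathcomp Require Import all_boot all_order all_algebra.
From mathcomp Require Import all_classical all_reals all_analysis.
From mathcomp Require Import measurable_realfun.
From mathcomp.algebra_tactics Require Import ring lra.
From mathcomp Require Import zify.
Import Order.TTheory GRing.Theory Num.Theory.
Import numFieldNormedType.Exports.
Local Open Scope classical_set_scope.
Local Open Scope ring_scope.

(** Put e_j := u^(j) - (pi_p u)^(j).  Integrating [int e_(nu+1) q] by parts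
    nu+1 times, the boundary terms of order 1..nu vanish because
    q^(i)(+-1) = 0, and the volume term [int e_0 q^(nu+1)] vanishes because
    deg q^(nu+1) <= p and u - pi_p u is orthogonal to polynomials of degree
    <= p.  On the other hand [int (pi_p u)^(nu+1) q] = 0, since
    deg (pi_p u)^(nu+1) < p - nu and Lambda_(p-nu)^(p+nu+1) is orthogonal to
    such polynomials (Legendre orthogonality, obtained by integrating
    Rodrigues' formula by parts).  Hence
      e_nu(1) q(1) - e_nu(-1) q(-1) = int u^(nu+1) q,
    and Cauchy-Schwarz bounds the right-hand side.  The endpoint -1 is the
    same argument for q(-x), which lies in the same Lambda space because
    L_k(-x) = (-1)^k L_k(x).
    As u^(nu+1) is merely integrable, integration by parts against a
    polynomial is proved for continuous integrands and extended by density
    of continuous functions in L^1, its defect being L^1-Lipschitz. *)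

Lemma size_derivn_leq {R : nzRingType} (s : {poly R}) k :
  (size s^`(k) <= size s - k)%N.
Proof.
by apply/leq_sizeP => j jk; rewrite coef_derivn nth_default ?mul0rn // -leq_subLR.
Qed.

Lemma derivn_exp_root {R : comNzRingType} (F : {poly R}) k j x :
  F.[x] = 0 -> (j < k)%N -> ((F ^+ k)^`(j)).[x] = 0.
Proof.
have factor i : (i <= k)%N -> exists s, (F ^+ k)^`(i) = F ^+ (k - i) * s.
  elim: i => [|i IH] ik; first by exists 1; rewrite subn0 mulr1.
  rewrite derivnS; have [s ->] := IH (ltnW ik).
  rewrite -(subnSK ik) derivM deriv_exp /=.
  by exists (F^`() * s *+ (k - i.+1).+1 + F * s^`()); rewrite exprS; ring.
move=> Fx jk; have [s ->] := factor j (ltnW jk).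
by rewrite -(subnSK jk) hornerM horner_exp Fx expr0n mul0r.
Qed.

Lemma horner_compN {R : comNzRingType} (s : {poly R}) x :
  (s \Po - 'X).[x] = s.[- x].
Proof. by rewrite horner_comp hornerN hornerX. Qed.

Lemma derivn_compN {R : comNzRingType} (s : {poly R}) i :
  (s \Po - 'X)^`(i) = (-1) ^+ i *: (s^`(i) \Po - 'X).
Proof.
elim: i => [|i IH]; first by rewrite expr0 scale1r.
rewrite derivnS IH derivZ deriv_comp derivN derivX exprS.
by rewrite -derivnS mulrN1 mulN1r scaleNr scalerN.
Qed.

Lemma quadratic_ge0_sqr_le {R : realFieldType} (a b c : R) : 0 <= a ->
  (forall t, 0 <= t ^+ 2 * a - 2 * t * c + b) -> c ^+ 2 <= a * b.
Proof.
move=> a0 quad_ge0; have [az|an0] := eqVneq a 0.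
  have [->|cn0] := eqVneq c 0; first by rewrite expr0n az mul0r.
  have := quad_ge0 ((b + 1) / (2 * c)); rewrite az.
  have -> : ((b + 1) / (2 * c)) ^+ 2 * 0 - 2 * ((b + 1) / (2 * c)) * c + b = -1.
    by field.
  by rewrite ler0N1.
have ap : 0 < a by rewrite lt_neqAle eq_sym an0.
have := quad_ge0 (c / a).
have -> : (c / a) ^+ 2 * a - 2 * (c / a) * c + b = b - c ^+ 2 / a by field.
by rewrite subr_ge0 ler_pdivrMr // mulrC.
Qed.

Section integrals_on_segments.
Context {R : realType}.
Local Notation mu := (@lebesgue_measure R).
Implicit Types (a b x y : R) (f g k : R -> R) (h : {poly R}).

Lemma continuous_within_horner h (A : set R) : {within A, continuous (horner h)}.
Proof. exact/continuous_subspaceT/continuous_horner. Qed.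

Lemma integrable_itv_continuous {a b k} :
  {within `[a, b], continuous k} -> mu.-integrable `[a, b] (EFin \o k).
Proof. by apply: continuous_compact_integrable; exact: segment_compact. Qed.

Lemma integrable_itv_horner a b h : mu.-integrable `[a, b] (EFin \o horner h).
Proof. exact/integrable_itv_continuous/continuous_within_horner. Qed.

Lemma integrable_itvMr {a b g k} : mu.-integrable `[a, b] (EFin \o g) ->
  {within `[a, b], continuous k} ->
  mu.-integrable `[a, b] (EFin \o (fun x => g x * k x)).
Proof.
move=> ig ck.
have mk : measurable_fun `[a, b] k.
  by apply: subspace_continuous_measurable_fun => //; exact: measurable_itv.
have bk : [bounded k x | x in `[a, b]].
  have /compact_bounded[M [_ kM]] := continuous_compact ck (@segment_compact _ a b).
  by exists M; split; rewrite ?num_real // => y /kM kMy x abx; apply: kMy; exists x.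
exact: integrableMl ig mk bk.
Qed.

Lemma integrable_itv_hornerM a b (r s : {poly R}) :
  mu.-integrable `[a, b] (EFin \o (fun x => r.[x] * s.[x])).
Proof.
exact: integrable_itvMr (integrable_itv_horner _ _ _) (continuous_within_horner _ _).
Qed.

Lemma integrable_itvB {a b f g} : mu.-integrable `[a, b] (EFin \o f) ->
  mu.-integrable `[a, b] (EFin \o g) ->
  mu.-integrable `[a, b] (EFin \o (fun x => f x - g x)).
Proof. exact: integrableB. Qed.

Lemma integrable_subitv {a b x y g} : a <= x -> y <= b ->
  mu.-integrable `[a, b] (EFin \o g) -> mu.-integrable `[x, y] (EFin \o g).
Proof.
by move=> ax yb; apply: integrableS => //; apply: subset_itv; rewrite bnd_simp.
Qed.

Lemma bounded_within_itv {a b k} : {within `[a, b], continuous k} ->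
  exists2 M, 0 <= M & forall x, a <= x <= b -> `|k x| <= M.
Proof.
move=> ck.
have /compact_bounded[M [_ kM]] := continuous_compact ck (@segment_compact _ a b).
exists (`|M| + 1); first by rewrite addr_ge0.
move=> x abx; apply: (kM (`|M| + 1)); first by rewrite (le_lt_trans (ler_norm M)) ?ltrDl.
by exists x => //=; rewrite in_itv.
Qed.

Lemma fine_lebesgue_measure_itv {a b} : a <= b -> fine (mu `[a, b]) = b - a.
Proof.
rewrite le_eqVlt => /predU1P[<-|ab]; rewrite lebesgue_measure_itv /= lte_fin.
  by rewrite ltxx subrr.
by rewrite ab.
Qed.

Lemma le_Rintegral_subitv a b x g : a <= x -> x <= b ->
  mu.-integrable `[a, b] (EFin \o g) -> (forall t, 0 <= g t) ->
  \int[mu]_(t in `[a, x]) g t <= \int[mu]_(t in `[a, b]) g t.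
Proof.
move=> ax xb ig g0.
have := @Rintegral_itvB _ g (BLeft a) (BRight b) x ig.
rewrite !bnd_simp => /(_ ax xb) gE.
by rewrite -subr_ge0 gE; exact: Rintegral_ge0.
Qed.

Lemma derivable_oo_LRcontinuous_horner a b h :
  derivable_oo_LRcontinuous (horner h) a b.
Proof.
split; first by move=> x _; exact: derivable_horner.
- by apply: cvg_at_right_filter; exact: continuous_horner.
- by apply: cvg_at_left_filter; exact: continuous_horner.
Qed.

Lemma Rintegral_deriv_horner a b h : a <= b ->
  \int[mu]_(x in `[a, b]) (h^`()).[x] = h.[b] - h.[a].
Proof.
rewrite le_eqVlt => /predU1P[<-|ab]; first by rewrite set_itv1 Rintegral_set1 subrr.
rewrite /Rintegral (@continuous_FTC2 _ _ (horner h)) //.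
- exact: continuous_within_horner.
- exact: derivable_oo_LRcontinuous_horner.
- by move=> x _; rewrite -derivE.
Qed.

End integrals_on_segments.

Section Cauchy_Schwarz.
Context d (T : measurableType d) (R : realType) (mu : {measure set T -> \bar R}).

Lemma Rintegral_Cauchy_Schwarz (D : set T) (f g : T -> R) : measurable D ->
  mu.-integrable D (EFin \o (fun x => f x ^+ 2)) ->
  mu.-integrable D (EFin \o (fun x => g x ^+ 2)) ->
  mu.-integrable D (EFin \o (fun x => f x * g x)) ->
  `|\int[mu]_(x in D) (f x * g x)| <=
  Num.sqrt (\int[mu]_(x in D) (f x ^+ 2)) * Num.sqrt (\int[mu]_(x in D) (g x ^+ 2)).
Proof.
move=> mD if2 ig2 ifg.
set a := \int[mu]_(x in D) (f x ^+ 2); set b := \int[mu]_(x in D) (g x ^+ 2).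
set c := \int[mu]_(x in D) (f x * g x).
have a0 : 0 <= a by apply: Rintegral_ge0 => x _; exact: sqr_ge0.
have b0 : 0 <= b by apply: Rintegral_ge0 => x _; exact: sqr_ge0.
suff : c ^+ 2 <= a * b by rewrite -sqrtrM // -sqrtr_sqr ler_sqrt // mulr_ge0.
apply: quadratic_ge0_sqr_le => // t.
have -> : t ^+ 2 * a - 2 * t * c + b = \int[mu]_(x in D)
    (t ^+ 2 * f x ^+ 2 + (- (2 * t) * (f x * g x) + g x ^+ 2)).
  have iZ r (h : T -> R) : mu.-integrable D (EFin \o h) ->
      mu.-integrable D (EFin \o (fun x => r * h x)).
    exact: integrableZl.
  rewrite RintegralD //; last 2 first.
  - exact: iZ _ _ if2.
  - exact: integrableD (iZ _ _ ifg) ig2.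
  rewrite RintegralD //; last exact: iZ _ _ ifg.
  by rewrite !RintegralZl // -/a -/b -/c; ring.
apply: Rintegral_ge0 => x _.
by rewrite (_ : _ + _ = (t * f x - g x) ^+ 2) ?sqr_ge0 //; ring.
Qed.

End Cauchy_Schwarz.

Section integration_by_parts_horner.
Context {R : realType}.
Local Notation mu := (@lebesgue_measure R).
Variables (a b : R) (h : {poly R}).
Hypothesis ab : a < b.

Definition ibp_defect (g : R -> R) : R :=
  \int[mu]_(x in `[a, b]) (g x * h.[x]) -
  ((\int[mu]_(t in `[a, b]) g t) * h.[b] -
   \int[mu]_(x in `[a, b]) ((\int[mu]_(t in `[a, x]) g t) * (h^`()).[x])).

Lemma ibp_defect_continuous g : continuous g -> ibp_defect g = 0.
Proof.
move=> cg; set G := fun x => \int[mu]_(t in `[a, x]) g t.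
have ig : mu.-integrable `[a, b] (EFin \o g).
  by apply: integrable_itv_continuous; exact: continuous_subspaceT.
have G' x : a < x < b -> derivable G x 1 /\ (G^`())%classic x = g x.
  by case/andP => ax xb; exact: continuous_FTC1_closed xb ig ax (cg x).
have GLR : derivable_oo_LRcontinuous G a b.
  have [_ Ga Gb] := (continuous_within_itvP _ ab).1
    (parameterized_integral_continuous (ltW ab) ig).
  by split => // x; rewrite in_itv => /G' [].
have dG : {in `]a, b[, (G^`())%classic =1 g} by move=> x; rewrite in_itv => /G' [].
have dh : {in `]a, b[, ((horner h)^`())%classic =1 horner h^`()}.
  by move=> x _; rewrite -derivE.
have := Rintegration_by_parts ab (continuous_within_horner h^`() _)
  (derivable_oo_LRcontinuous_horner a b h) dh (continuous_subspaceT cg) GLR dG.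
have -> : G a = 0 by rewrite /G set_itv1 Rintegral_set1.
rewrite mulr0 subr0 /ibp_defect => ibp.
have -> : \int[mu]_(x in `[a, b]) (g x * h.[x]) = \int[mu]_(x in `[a, b]) (h.[x] * g x).
  by apply: eq_Rintegral => x _; exact: mulrC.
have -> : \int[mu]_(x in `[a, b]) ((\int[mu]_(t in `[a, x]) g t) * (h^`()).[x]) =
          \int[mu]_(x in `[a, b]) ((h^`()).[x] * G x).
  by apply: eq_Rintegral => x _; exact: mulrC.
by rewrite ibp /G mulrC subrr.
Qed.

Lemma integrable_primitive_mul_horner (k : {poly R}) {g} :
  mu.-integrable `[a, b] (EFin \o g) ->
  mu.-integrable `[a, b]
    (EFin \o (fun x => (\int[mu]_(t in `[a, x]) g t) * k.[x])).
Proof.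
move=> ig; apply: integrable_itvMr; last exact: continuous_within_horner.
exact/integrable_itv_continuous/(parameterized_integral_continuous (ltW ab)).
Qed.

Lemma ibp_defectB g1 g2 :
  mu.-integrable `[a, b] (EFin \o g1) -> mu.-integrable `[a, b] (EFin \o g2) ->
  ibp_defect (fun x => g1 x - g2 x) = ibp_defect g1 - ibp_defect g2.
Proof.
move=> i1 i2.
have primB x : a <= x <= b -> \int[mu]_(t in `[a, x]) (g1 t - g2 t) =
    \int[mu]_(t in `[a, x]) g1 t - \int[mu]_(t in `[a, x]) g2 t.
  by case/andP => ax xb; rewrite RintegralB //; exact: integrable_subitv (lexx a) xb _.
rewrite /ibp_defect primB; last by rewrite lexx ltW.
have -> : \int[mu]_(x in `[a, b]) ((g1 x - g2 x) * h.[x]) =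
    \int[mu]_(x in `[a, b]) (g1 x * h.[x]) - \int[mu]_(x in `[a, b]) (g2 x * h.[x]).
  rewrite -RintegralB //; try exact: integrable_itvMr (continuous_within_horner _ _).
  by apply: eq_Rintegral => x _; rewrite mulrBl.
have -> :
    \int[mu]_(x in `[a, b]) ((\int[mu]_(t in `[a, x]) (g1 t - g2 t)) * (h^`()).[x]) =
    \int[mu]_(x in `[a, b]) ((\int[mu]_(t in `[a, x]) g1 t) * (h^`()).[x]) -
    \int[mu]_(x in `[a, b]) ((\int[mu]_(t in `[a, x]) g2 t) * (h^`()).[x]).
  rewrite -RintegralB //; try exact: integrable_primitive_mul_horner.
  apply: eq_Rintegral => x; rewrite inE /= in_itv /= => xab.
  by rewrite primB // mulrBl.
ring.
Qed.

Lemma ibp_defect_le : exists2 K, 0 <= K & forall g,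
  mu.-integrable `[a, b] (EFin \o g) ->
  `|ibp_defect g| <= K * \int[mu]_(x in `[a, b]) `|g x|.
Proof.
have [M M0 hM] := bounded_within_itv (continuous_within_horner h `[a, b]).
have [M' M'0 h'M'] := bounded_within_itv (continuous_within_horner h^`() `[a, b]).
exists (M + M + M' * (b - a)); first by rewrite !addr_ge0 // mulr_ge0 // subr_ge0 ltW.
move=> g ig; set E := \int[mu]_(x in `[a, b]) `|g x|.
have E0 : 0 <= E by exact: Rintegral_ge0.
have primE x : a <= x <= b -> `|\int[mu]_(t in `[a, x]) g t| <= E.
  case/andP => ax xb.
  apply: le_trans (le_normr_Rintegral _ (integrable_subitv (lexx a) xb ig)) _ => //.
  by apply: le_Rintegral_subitv => //; exact: integrable_norm.
have cst_within (c : R) : {within `[a, b], continuous (fun=> c)}.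
  exact/continuous_subspaceT/cst_continuous.
have ghE : `|\int[mu]_(x in `[a, b]) (g x * h.[x])| <= E * M.
  have igh := integrable_itvMr ig (continuous_within_horner h `[a, b]).
  apply: le_trans (le_normr_Rintegral _ igh) _ => //.
  rewrite -RintegralZr //; last exact: integrable_norm.
  apply: le_Rintegral => //; first exact: integrable_norm.
    exact: integrable_itvMr (integrable_norm ig) (cst_within _).
  move=> x; rewrite /= in_itv /= => xab.
  by rewrite normrM ler_wpM2l // hM.
have bdryE : `|(\int[mu]_(t in `[a, b]) g t) * h.[b]| <= E * M.
  by rewrite normrM ler_pM // ?primE ?hM // lexx ltW.
have primhE : `|\int[mu]_(x in `[a, b]) ((\int[mu]_(t in `[a, x]) g t) * (h^`()).[x])|
    <= E * M' * (b - a).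
  have igh' := integrable_primitive_mul_horner h^`() ig.
  apply: le_trans (le_normr_Rintegral _ igh') _ => //.
  rewrite -(fine_lebesgue_measure_itv (ltW ab)) -Rintegral_cst //.
  apply: le_Rintegral => //; first exact: integrable_norm.
    exact: integrable_itv_continuous (cst_within _).
  move=> x; rewrite /= in_itv /= => xab.
  by rewrite normrM ler_pM // ?primE ?h'M'.
rewrite /ibp_defect; apply: le_trans (ler_normB _ _) _.
have -> : (M + M + M' * (b - a)) * E = E * M + (E * M + E * M' * (b - a)) by ring.
by apply: lerD => //; apply: le_trans (ler_normB _ _) _; exact: lerD.
Qed.

Lemma ibp_defect_integrable g :
  mu.-integrable `[a, b] (EFin \o g) -> ibp_defect g = 0.
Proof.
move=> ig; have [K K0 defectK] := ibp_defect_le.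
have abfin : (mu `[a, b] < +oo)%E.
  by rewrite lebesgue_measure_itv; case: ifP => _; rewrite ?ltry.
have [g_ [cg ig_ g_g]] :=
  approximation_continuous_integrable (measurable_itv _) abfin ig.
suff : (`|ibp_defect g|%:E <= 0)%E by rewrite lee_fin normr_le0 => /eqP.
have := cvgeZl (fin_numE K%:E) g_g; rewrite mule0 => /(cvge_ge _); apply.
apply: nearW => n; have igg_ := integrable_itvB ig (ig_ n).
have := defectK _ igg_; rewrite ibp_defectB // (ibp_defect_continuous _ (cg n)) subr0.
rewrite -lee_fin => /le_trans; apply.
by rewrite EFinM fineK // integrable_fin_num //; exact: integrable_norm.
Qed.

Lemma Rintegration_by_parts_horner g : mu.-integrable `[a, b] (EFin \o g) ->
  \int[mu]_(x in `[a, b]) (g x * h.[x]) =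
  (\int[mu]_(t in `[a, b]) g t) * h.[b] -
  \int[mu]_(x in `[a, b]) ((\int[mu]_(t in `[a, x]) g t) * (h^`()).[x]).
Proof. by move/ibp_defect_integrable/eqP; rewrite subr_eq0 => /eqP. Qed.

Lemma Rintegration_by_parts_abscont f g : mu.-integrable `[a, b] (EFin \o g) ->
  (forall x y, a <= y -> y <= x -> x <= b -> f x - f y = \int[mu]_(t in `[y, x]) g t) ->
  \int[mu]_(x in `[a, b]) (g x * h.[x]) =
  f b * h.[b] - f a * h.[a] - \int[mu]_(x in `[a, b]) (f x * (h^`()).[x]).
Proof.
move=> ig fg; rewrite Rintegration_by_parts_horner // -fg ?lexx ?ltW //.
have -> : \int[mu]_(x in `[a, b]) (f x * (h^`()).[x]) =
    \int[mu]_(x in `[a, b]) ((\int[mu]_(t in `[a, x]) g t) * (h^`()).[x] +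
                             f a * (h^`()).[x]).
  apply: eq_Rintegral => x; rewrite inE /= in_itv /= => /andP[ax xb].
  by rewrite -fg // -mulrDl subrK.
rewrite RintegralD //; first last.
- exact: integrableZl (integrable_itv_horner _ _ _).
- exact: integrable_primitive_mul_horner.
rewrite RintegralZl //; last exact: integrable_itv_horner.
rewrite Rintegral_deriv_horner ?ltW //; ring.
Qed.

End integration_by_parts_horner.

Arguments Rintegration_by_parts_abscont {R a b h} ab {f g}.

Section iterated_integration_by_parts.
Context {R : realType}.
Local Notation mu := (@lebesgue_measure R).

Definition abscont_chain (a b : R) (n : nat) (V : nat -> R -> R) : Prop :=
  (forall j, (j <= n)%N -> mu.-integrable `[a, b] (EFin \o V j)) /\
  (forall j, (j < n)%N -> forall x y, a <= y -> y <= x -> x <= b ->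
     V j x - V j y = \int[mu]_(t in `[y, x]) V j.+1 t).

Context {a b : R}.

Lemma abscont_chain_horner (P : {poly R}) n :
  abscont_chain a b n (fun j => horner P^`(j)).
Proof.
split=> [j _|j _ x y _ yx _]; first exact: integrable_itv_horner.
by rewrite derivnS Rintegral_deriv_horner.
Qed.

Lemma abscont_chainB {n U V} : abscont_chain a b n U -> abscont_chain a b n V ->
  abscont_chain a b n (fun j x => U j x - V j x).
Proof.
move=> [iU dU] [iV dV]; split=> [j jn|j jn x y ay yx xb].
  exact: integrable_itvB (iU j jn) (iV j jn).
have jn' : (j.+1 <= n)%N by [].
rewrite RintegralB //; last 2 first.
- exact: integrable_subitv ay xb (iU _ jn').
- exact: integrable_subitv ay xb (iV _ jn').
by rewrite -dU // -dV //; ring.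
Qed.

Hypothesis ab : a < b.

Lemma Rintegration_by_parts_iter {n V} (h : {poly R}) m :
  abscont_chain a b n V -> (m <= n)%N ->
  \int[mu]_(x in `[a, b]) (V n x * h.[x]) =
  \sum_(0 <= i < m) (-1) ^+ i *
     (V (n - i.+1)%N b * (h^`(i)).[b] - V (n - i.+1)%N a * (h^`(i)).[a]) +
  (-1) ^+ m * \int[mu]_(x in `[a, b]) (V (n - m)%N x * (h^`(m)).[x]).
Proof.
move=> [iV dV]; elim: m => [_|m IH mn].
  by rewrite big_geq // add0r expr0 mul1r subn0 derivn0.
have nmS : (n - m = (n - m.+1).+1)%N by rewrite subnSK.
rewrite IH ?(ltnW mn) // big_nat_recr //= nmS.
rewrite (Rintegration_by_parts_abscont ab (iV _ _) (dV _ _)).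
- by rewrite -derivnS exprS; ring.
- by rewrite -nmS leq_subr.
- by rewrite ltn_subrL (leq_ltn_trans (leq0n m) mn).
Qed.

Lemma Rintegration_by_parts_derivn_flat {n V h} :
  abscont_chain a b n.+1 V ->
  (forall i, (1 <= i <= n)%N -> (h^`(i)).[a] = 0 /\ (h^`(i)).[b] = 0) ->
  \int[mu]_(x in `[a, b]) (V n.+1 x * h.[x]) =
  V n b * h.[b] - V n a * h.[a] +
  (-1) ^+ n.+1 * \int[mu]_(x in `[a, b]) (V 0%N x * (h^`(n.+1)).[x]).
Proof.
move=> chV hflat; rewrite (Rintegration_by_parts_iter h _ chV (leqnn _)) subnn.
rewrite big_ltn // big1_seq ?addr0 ?expr0 ?mul1r ?subSS ?subn0 //.
move=> i /andP[_]; rewrite mem_index_iota ltnS => /hflat[-> ->].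
by rewrite !mulr0 subrr mulr0.
Qed.

End iterated_integration_by_parts.

Section Legendre_orthogonality.
Context {R : realType}.
Local Notation mu := (@lebesgue_measure R).

Lemma size_legendre k : (size (legendre R k) <= k.+1)%N.
Proof.
rewrite /legendre; apply: leq_trans (size_scale_leq _ _) _.
apply: leq_trans (size_derivn_leq _ _) _.
have sE : size ('X ^+ 2 - 1 : {poly R}) = 3 by rewrite -polyC1 size_XnsubC.
have := size_poly_exp_leq ('X ^+ 2 - 1 : {poly R}) k.
by rewrite sE => /(leq_sub2r k) /leq_trans; apply; lia.
Qed.

Lemma legendre_orthogonal k (r : {poly R}) : (size r <= k)%N ->
  \int[mu]_(x in `[-1, 1]) (r.[x] * (legendre R k).[x]) = 0.
Proof.
move=> rk; set A := ('X ^+ 2 - 1 : {poly R}) ^+ k.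
have A_pm1 j : (j < k)%N -> (A^`(j)).[1] = 0 /\ (A^`(j)).[-1] = 0.
  by move=> jk; split; apply: derivn_exp_root jk; rewrite !hornerE; ring.
have ltm11 : (-1 : R) < 1 by lra.
transitivity ((2 ^+ k * k`!%:R)^-1 *
    \int[mu]_(x in `[-1, 1]) ((A^`(k)).[x] * r.[x])).
  rewrite -RintegralZl //; last exact: integrable_itv_hornerM.
  by apply: eq_Rintegral => x _; rewrite /legendre hornerZ; ring.
rewrite (Rintegration_by_parts_iter ltm11 r k (abscont_chain_horner A k) (leqnn k)).
rewrite subnn (derivn_poly0 rk) big1_seq => [|i]; last first.
  move=> /andP[_]; rewrite mem_index_iota => /andP[_ ik].
  have /A_pm1[-> ->] : (k - i.+1 < k)%N by lia.
  by rewrite !mul0r subrr mulr0.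
under eq_Rintegral do rewrite horner0 mulr0.
by rewrite Rintegral_cst // !mul0r mulr0 add0r mulr0.
Qed.

Lemma size_in_Lambda {i j} {q : {poly R}} : in_Lambda i j q -> (size q <= j.+1)%N.
Proof.
case=> c ->; rewrite big_seq.
apply: (big_ind (fun s : {poly R} => (size s <= j.+1)%N)).
- by rewrite size_poly0.
- by move=> s t sj tj; apply: leq_trans (size_polyD _ _) _; rewrite geq_max sj tj.
- move=> k; rewrite mem_index_iota => /andP[_ kj].
  exact: leq_trans (size_scale_leq _ _) (leq_trans (size_legendre k) kj).
Qed.

Lemma in_Lambda_orthogonal {i j} {q : {poly R}} (r : {poly R}) : in_Lambda i j q ->
  (size r <= i)%N -> \int[mu]_(x in `[-1, 1]) (r.[x] * q.[x]) = 0.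
Proof.
case=> c -> ri; rewrite big_seq.
apply: (big_ind (fun s : {poly R} => \int[mu]_(x in `[-1, 1]) (r.[x] * s.[x]) = 0)).
- under eq_Rintegral do rewrite horner0 mulr0.
  by rewrite Rintegral_cst // mul0r.
- move=> s t rs rt; rewrite -[0]addr0 -{1}rs -rt.
  rewrite -RintegralD //; try exact: integrable_itv_hornerM.
  by apply: eq_Rintegral => x _; rewrite hornerD mulrDr.
- move=> k; rewrite mem_index_iota => /andP[ik _].
  under eq_Rintegral do rewrite hornerZ mulrCA.
  rewrite RintegralZl //; last exact: integrable_itv_hornerM.
  by rewrite legendre_orthogonal ?mulr0 // (leq_trans ri).
Qed.

End Legendre_orthogonality.

Section reflection.
Context {R : realType}.
Local Notation mu := (@lebesgue_measure R).

Lemma legendre_compN k : legendre R k \Po - 'X = (-1) ^+ k *: legendre R k.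
Proof.
set A := ('X ^+ 2 - 1 : {poly R}) ^+ k.
have AN : A \Po - 'X = A.
  by rewrite /A rmorphXn rmorphB rmorph1 rmorphXn /= comp_polyX sqrrN.
have := derivn_compN A k; rewrite AN => Ak.
rewrite /legendre -/A comp_polyZ scalerA (mulrC ((-1) ^+ k)) -scalerA.
congr (_ *: _).
by rewrite {2}Ak scalerA -exprMn mulN1r opprK expr1n scale1r.
Qed.

Lemma in_Lambda_compN {i j} {q : {poly R}} :
  in_Lambda i j q -> in_Lambda i j (q \Po - 'X).
Proof.
case=> c ->; exists (fun k => (-1) ^+ k * c k).
rewrite raddf_sum; apply: eq_bigr => k _ /=.
by rewrite comp_polyZ legendre_compN scalerA mulrC.
Qed.

Lemma Rintegral_horner_compN a b (s : {poly R}) : a <= b ->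
  \int[mu]_(x in `[a, b]) (s \Po - 'X).[x] = \int[mu]_(x in `[- b, - a]) s.[x].
Proof.
move=> ab; rewrite /Rintegral integration_by_substitution_oppr //.
  by congr fine; apply: eq_integral => x _ /=; rewrite horner_compN.
exact: continuous_within_horner.
Qed.

Lemma L2norm_horner_compN (s : {poly R}) :
  L2norm (horner (s \Po - 'X)) = L2norm (horner s).
Proof.
rewrite /L2norm /Omega; congr Num.sqrt.
transitivity (\int[mu]_(x in `[-1, 1]) ((s ^+ 2) \Po - 'X).[x]).
  by apply: eq_Rintegral => x _; rewrite rmorphXn /= horner_exp.
rewrite Rintegral_horner_compN ?opprK; last lra.
by apply: eq_Rintegral => x _; rewrite horner_exp.
Qed.

End reflection.

Section L2_projection_error.
Context {R : realType}.
Local Notation mu := (@lebesgue_measure R).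
Context {p nu : nat} {U : nat -> R -> R} {P q : {poly R}}.
Hypothesis hU : sobolev_chain nu.+1 U.
Hypothesis hq : in_Lambda (p - nu) (p + nu + 1) q.
Hypothesis hq_flat :
  forall i, (1 <= i <= nu)%N -> (q^`(i)).[1] = 0 /\ (q^`(i)).[-1] = 0.
Hypothesis hP : is_L2proj p (U 0%N) P.

Lemma L2proj_error_boundary :
  (U nu 1 - (P^`(nu)).[1]) * q.[1] - (U nu (-1) - (P^`(nu)).[-1]) * q.[-1] =
  \int[mu]_(x in `[-1, 1]) (U nu.+1 x * q.[x]).
Proof.
have [iU [dU _]] := hU; have [sizeP orthP] := hP.
have ltm11 : (-1 : R) < 1 by lra.
have chain_e := abscont_chainB (conj iU dU) (abscont_chain_horner P nu.+1).
have flat i : (1 <= i <= nu)%N -> (q^`(i)).[-1] = 0 /\ (q^`(i)).[1] = 0.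
  by move/hq_flat => [].
have := Rintegration_by_parts_derivn_flat ltm11 chain_e flat.
have -> : \int[mu]_(x in `[-1, 1]) ((U nu.+1 x - (P^`(nu.+1)).[x]) * q.[x]) =
    \int[mu]_(x in `[-1, 1]) (U nu.+1 x * q.[x]) -
    \int[mu]_(x in `[-1, 1]) ((P^`(nu.+1)).[x] * q.[x]).
  rewrite -RintegralB //; last 2 first.
  - exact: integrable_itvMr (iU _ (leqnn _)) (continuous_within_horner _ _).
  - exact: integrable_itv_hornerM.
  by apply: eq_Rintegral => x _; rewrite mulrBl.
rewrite (in_Lambda_orthogonal _ hq) ?subr0; last first.
  exact: leq_trans (size_derivn_leq _ _) (leq_sub2r nu.+1 sizeP).
have -> : \int[mu]_(x in `[-1, 1]) ((U 0%N x - P.[x]) * (q^`(nu.+1)).[x]) = 0.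
  apply: orthP; apply: leq_trans (size_derivn_leq _ _) _.
  by apply: leq_trans (leq_sub2r _ (size_in_Lambda hq)) _; lia.
by rewrite mulr0 addr0 => ->.
Qed.

Lemma L2proj_error_boundary_le :
  `|(U nu 1 - (P^`(nu)).[1]) * q.[1] - (U nu (-1) - (P^`(nu)).[-1]) * q.[-1]|
  <= L2norm (horner q) * L2norm (U nu.+1).
Proof.
have [iU [_ [_ iU2]]] := hU.
rewrite L2proj_error_boundary [X in _ <= X]mulrC.
apply: Rintegral_Cauchy_Schwarz => //.
- exact: integrable_itv_hornerM.
- exact: integrable_itvMr (iU _ (leqnn _)) (continuous_within_horner _ _).
Qed.

End L2_projection_error.

Theorem lemma5 (R : realType) (p nu : nat) (hnu : (nu <= p)%N)
  (U : nat -> R -> R) (hU : sobolev_chain nu.+1 U)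
  (q : {poly R}) (hqL : in_Lambda (p - nu) (p + nu + 1) q)
  (hq1 : q.[1] = 1) (hqm1 : q.[-1] = 0)
  (hqd : forall i : nat, (1 <= i <= nu)%N ->
           (q^`(i)).[1] = 0 /\ (q^`(i)).[-1] = 0)
  (P : {poly R}) (hP : is_L2proj p (U 0%N) P) :
  `| U nu 1 - (P^`(nu)).[1] | <= L2norm (fun x => q.[x]) * L2norm (U nu.+1) /\
  `| U nu (-1) - (P^`(nu)).[-1] | <= L2norm (fun x => q.[x]) * L2norm (U nu.+1).
Proof.
have := L2proj_error_boundary_le hU hqL hqd hP.
rewrite hq1 hqm1 mulr1 mulr0 subr0 => bound1; split => //.
have hqNd i : (1 <= i <= nu)%N ->
    ((q \Po - 'X)^`(i)).[1] = 0 /\ ((q \Po - 'X)^`(i)).[-1] = 0.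
  move/hqd => [q1 qm1].
  by rewrite derivn_compN !hornerZ !horner_compN opprK q1 qm1 !mulr0.
have := L2proj_error_boundary_le hU (in_Lambda_compN hqL) hqNd hP.
by rewrite L2norm_horner_compN !horner_compN opprK hq1 hqm1 mulr0 mulr1 sub0r normrN.
Qed.
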